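(* Let $\mathcal{G}=(\mathcal{V},\mathcal{E})$ be a finite tree with at least one edge and let $i\in\mathcal{V}$ have degree $d_i$. Then the return time of the begrudgingly backtracking random walk at $i$ is $$\tilde{\mathtt{t}}(i;\mathcal{G})=\frac{2|\mathcal{E}|}{d_i}.$$
   Context: Begrudgingly backtracking random walk (BBRW) on $\mathcal{G}$: $x_1$ is uniform on the neighbors of $x_0$; for $n\ge0$, given $x_n=u,x_{n+1}=v$, $x_{n+2}$ is uniform on $\mathcal{N}(v)\setminus\{u\}$ if this set is nonempty, and $x_{n+2}=u$ otherwise. With $\overline{T}_i=\min\{n>0:x_n=i\}$, the return time is $\tilde{\mathtt{t}}(i;\mathcal{G})=\mathbb{E}[\overline{T}_i\mid x_0=i]$. *)

From HB Require Import structures.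
From mathcomp Require Import all_boot all_order all_algebra.
From mathcomp Require Import all_classical all_reals topology normedtype sequences.
Set Implicit Arguments. Unset Strict Implicit. Unset Printing Implicit Defensive.
Import Order.TTheory GRing.Theory Num.Theory.
Local Open Scope ring_scope.

Section BBRW.
Variables (T : finType) (e : rel T).

Definition simple_graph : Prop := symmetric e /\ irreflexive e.

Definition edges : {set {set T}} :=
  [set E : {set T} | [exists x, exists y, e x y && (E == [set x; y])]].

Definition nbr (v : T) : {set T} := [set w | e v w].
Definition deg (v : T) : nat := #|nbr v|.

Definition is_tree : Prop :=
  (forall x y : T, connect e x y) /\
  (forall c : seq T, uniq c -> (2 < size c)%N -> ~~ cycle e c).

Variable R : realType.

(* BBRW second-order transition: probability that x_{n+2} = w given
   x_n = u, x_{n+1} = v. *)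
Definition bbrw_step (u v w : T) : R :=
  let S := nbr v :\ u in
  if #|S| == 0%N then (w == u)%:R else (w \in S)%:R / #|S|%:R.

Definition bbrw_path_prob (i : T) (n : nat) (x : (n.+2).-tuple T) : R :=
  (nth i x 0 == i)%:R * ((e i (nth i x 1))%:R / (deg i)%:R) *
  \prod_(k < n) bbrw_step (nth i x k) (nth i x k.+1) (nth i x k.+2).

(* P(Tbar_i = m | x_0 = i), Tbar_i = min {n > 0 : x_n = i} *)
Definition bbrw_return_dist (i : T) (m : nat) : R :=
  match m with
  | 0 => 0
  | n.+1 =>
    \sum_(x : (n.+2).-tuple T |
            (nth i x 0 == i) && (nth i x n.+1 == i) &&
            [forall k : 'I_n.+2, ((0 < k) && (k < n.+1))%N ==> (nth i x k != i)])
       bbrw_path_prob i x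
  end.

End BBRW.

(* From a pair of consecutive positions (an arc) the walk moves to an arc,
   and the uniform measure on the 2|E| arcs is stationary for this chain.
   Started from it, the mass [Phi n] of trajectories avoiding i at times
   1, ..., n drops from n to n+1 by exactly d_i P_i(T > n), the mass leaving
   through the arcs out of i (Kac's argument); hence
   sum_n P_i(T > n) = (Phi 0 - lim Phi) / d_i.  On a tree every arc reaches i
   with positive probability within bounded time (go forward without backtracking
   to a leaf, bounce back, then follow the unique path to i), so Phi decays
   geometrically to 0.  Thus T is a.s. finite and its mean, the tail sum
   sum_n P_i(T > n), is Phi 0 / d_i = 2|E| / d_i. *)

From HB Require Import structures.
From mathcomp Require Import all_boot all_order all_algebra.
From mathcomp Require Import all_classical all_reals topology normedtype sequences.
From mathcomp Require Import ring lra zify.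
Set Implicit Arguments. Unset Strict Implicit. Unset Printing Implicit Defensive.
Import Order.TTheory GRing.Theory Num.Theory numFieldNormedType.Exports.
Local Open Scope classical_set_scope.
Local Open Scope ring_scope.

Section TailSum.
Variable R : realFieldType.
Implicit Types r p : R ^nat.

Lemma series_telescope_cvg r p : (forall n, p n.+1 = r n - r n.+1) ->
  r @ \oo --> 0 -> series p @ \oo --> p 0%N + r 0%N.
Proof.
move=> pE r0.
have sE n : series p n.+1 = p 0%N + r 0%N - r n.
  elim: n => [|n IH]; first by rewrite seriesS /series/= big_geq // addr0 addrK.
  by rewrite seriesSr IH pE addrA subrK.
rewrite -cvg_shiftS (funext sE) -{2}[p 0%N + r 0%N]subr0.
exact: cvgB (cvg_cst _) r0.
Qed.

Lemma nonincreasing_mul_le_series r n :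
  (forall m, 0 <= r m) -> nonincreasing_seq r ->
  n%:R * r n <= 2 * (series r n - series r n./2).
Proof.
move=> r_ge0 r_dec; set h := n./2.
have h_le_n : (h <= n)%N by rewrite /h leq_half_double -addnn; lia.
have n_le_twice : (n <= 2 * (n - h))%N.
  by have := odd_double_half n; rewrite -/h -mul2n; case: (odd n) => /=; lia.
rewrite /series /= (big_cat_nat (leq0n h) h_le_n) /= addrC addrK.
apply: (@le_trans _ _ (2 * ((n - h)%:R * r n))).
  by rewrite mulrA -natrM ler_wpM2r // ler_nat.
rewrite ler_wpM2l // mulr_natl -sumr_const_nat.
by apply: ler_sum_nat => j /andP[_ /ltnW /r_dec].
Qed.

Lemma series_tail_sum r p (L : R) : nonincreasing_seq r ->
  (forall n, p n.+1 = r n - r n.+1) -> series r @ \oo --> L ->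
  series (fun m => m%:R * p m) @ \oo --> L.
Proof.
move=> r_dec pE rL.
have r_ge0 m : 0 <= r m.
  have r0 : r @ \oo --> (0 : R) := cvg_series_cvg_0 (cvgP _ rL).
  by rewrite -(cvg_lim _ r0) //; apply: nonincreasing_cvgn_ge => //; exact: cvgP r0.
have sE n : series (fun m => m%:R * p m) n.+1 = series r n - n%:R * r n.
  elim: n => [|n IH]; first by rewrite seriesS /series /= !big_geq // !mul0r subr0 addr0.
  by rewrite seriesSr IH seriesSr pE -addn1 natrD; ring.
have mul_r_cvg0 : (fun n => n%:R * r n) @ \oo --> (0 : R).
  apply/cvgrPdist_le => eps eps0.
  have [N _ S_near] := proj1 (cvgrPdist_le _ _) rL (eps / 4) (divr_gt0 eps0 (ltr0n _ 4)).
  near=> n; rewrite sub0r normrN ger0_norm ?mulr_ge0 //.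
  apply: le_trans (nonincreasing_mul_le_series n r_ge0 r_dec) _.
  have Nh : (N <= n./2)%N by near: n; exists N.*2 => // m; rewrite /= geq_half_double.
  have Nn : (N <= n)%N by near: n; exact: nbhs_infty_ge.
  have := S_near _ Nh; have := S_near _ Nn.
  rewrite !ler_distl => /andP[h1 h2] /andP[h3 h4]; lra.
rewrite -cvg_shiftS (funext sE) -[L]subr0; exact: cvgB.
Unshelve. all: by end_near.
Qed.

End TailSum.

Lemma sum_tuple0 (T : finType) (V : nmodType) (F : 0.-tuple T -> V) :
  \sum_(t : 0.-tuple T) F t = F [tuple].
Proof. by rewrite (big_pred1 [tuple]) // => t /=; symmetry; apply/eqP; exact: tuple0. Qed.

Lemma sum_tuple_cons (T : finType) (V : nmodType) n (F : n.+1.-tuple T -> V) :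
  \sum_(t : n.+1.-tuple T) F t = \sum_(a : T) \sum_(s : n.-tuple T) F [tuple of a :: s].
Proof.
rewrite pair_big /= (reindex (fun p : T * n.-tuple T => [tuple of p.1 :: p.2])) //=.
exists (fun t => (thead t, [tuple of behead t])) => [[a s] _|t _] /=.
  by congr (_, _); apply: val_inj.
by rewrite -tuple_eta.
Qed.

Lemma eq_set2 (T : finType) (a b x y : T) : a != b ->
  ([set a; b] == [set x; y])%SET = ((a == x) && (b == y)) || ((a == y) && (b == x)).
Proof.
move=> a_neq_b; apply/eqP/idP => [ab_xy | /orP[] /andP[/eqP-> /eqP->] //].
  have := set21 a b; have := set22 a b; rewrite ab_xy !inE.
  by case/orP=> /eqP b_eq; case/orP=> /eqP a_eq; move: a_neq_b; rewrite a_eq b_eq ?eqxx ?orbT.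
by apply/setP => z; rewrite !inE orbC.
Qed.

Lemma deg_gt0_connected (T : finType) (e : rel T) v :
  (forall x y, connect e x y) -> (0 < #|edges e|)%N -> (0 < deg e v)%N.
Proof.
move=> e_conn /card_gt0P[E]; rewrite /edges finset.in_set.
case/existsP=> x /existsP[y /andP[xy _]]; apply/card_gt0P.
have [<- | x_neq_v] := eqVneq x v; first by exists y; rewrite inE.
case/connectP: (e_conn v x) => -[|w p] /=; first by move=> _ x_eq; rewrite x_eq eqxx in x_neq_v.
by case/andP=> vw _ _; exists w; rewrite inE.
Qed.

Section ReturnDistribution.
Variables (R : realType) (T : finType) (e : rel T) (i : T).
Local Notation step := (bbrw_step e R).

Lemma bbrw_step_ge0 u v w : 0 <= step u v w.
Proof. by rewrite /bbrw_step; case: ifP => _; rewrite ?divr_ge0. Qed.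

Lemma bbrw_step_sum1 u v : \sum_w step u v w = 1.
Proof.
rewrite /bbrw_step /=; have [_|S_neq0] := eqVneq #|nbr e v :\ u| 0%N.
  by rewrite (bigD1 u) //= eqxx big1 ?addr0 // => w /negbTE ->.
rewrite -mulr_suml.
have -> : \sum_w ((w \in nbr e v :\ u)%:R : R) = #|nbr e v :\ u|%:R.
  by rewrite -sum1_card natr_sum [RHS]big_mkcond; apply: eq_bigr => w _; case: (_ \in _).
by rewrite divff // pnatr_eq0.
Qed.

Lemma bbrw_step_gt0 u v w : e v w -> w != u -> 0 < step u v w.
Proof.
move=> vw w_neq_u; have Sw : w \in nbr e v :\ u by rewrite in_setD1 w_neq_u inE.
have /card_gt0P S_gt0 : exists w, w \in nbr e v :\ u by exists w.
by rewrite /bbrw_step /= (negbTE (lt0n_neq0 S_gt0)) Sw mul1r invr_gt0 ltr0n.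
Qed.

Lemma sum_nbr_deg v : \sum_w (e v w)%:R = (deg e v)%:R :> R.
Proof.
rewrite /deg -sum1_card natr_sum [RHS]big_mkcond.
by apply: eq_bigr => w _; rewrite inE; case: (e v w).
Qed.

(* [survival n u v] is the probability that the walk with [x_0 = u], [x_1 = v]
   avoids [i] at times [1, ..., n]; [first_hit n u v] is the probability that
   it first visits [i] (at a positive time) at time [n.+1]. *)
Fixpoint survival n u v : R :=
  if n is n'.+1 then (v != i)%:R * \sum_w step u v w * survival n' v w else 1.

Fixpoint first_hit n u v : R :=
  if n is n'.+1 then (v != i)%:R * \sum_w step u v w * first_hit n' v w
  else (v == i)%:R.

Lemma survivalS n u v :
  survival n.+1 u v = (v != i)%:R * \sum_w step u v w * survival n v w.
Proof. by []. Qed.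

Lemma first_hitS n u v :
  first_hit n.+1 u v = (v != i)%:R * \sum_w step u v w * first_hit n v w.
Proof. by []. Qed.

Lemma survival_ge0 n u v : 0 <= survival n u v.
Proof.
elim: n u v => [|n IH] u v //=.
by rewrite mulr_ge0 // sumr_ge0 // => w _; rewrite mulr_ge0 ?bbrw_step_ge0.
Qed.

Lemma survival_le1 n u v : survival n u v <= 1.
Proof.
elim: n u v => [|n IH] u v //=; case: (v != i); rewrite ?mul0r // mul1r.
rewrite -(bbrw_step_sum1 u v) ler_sum // => w _.
by rewrite ler_piMr ?bbrw_step_ge0.
Qed.

Lemma survival_nonincreasing u v : nonincreasing_seq (fun n => survival n u v).
Proof.
apply/nonincreasing_seqP => n; elim: n u v => [|n IH] u v; first exact: survival_le1.
apply: ler_wpM2l => //; apply: ler_sum => w _.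
by apply: ler_wpM2l; [exact: bbrw_step_ge0 | exact: IH].
Qed.

Lemma first_hitE n u v : first_hit n u v = survival n u v - survival n.+1 u v.
Proof.
elim: n u v => [|n IH] u v.
  rewrite survivalS; under eq_bigr do rewrite mulr1.
  by rewrite bbrw_step_sum1 mulr1 /=; case: (v == i); rewrite ?subr0 ?subrr.
rewrite first_hitS !survivalS -mulrBr -sumrB; congr (_ * _).
by apply: eq_bigr => w _; rewrite IH mulrBr.
Qed.

Definition first_visit_at_end v (s : seq T) :=
  (last v s == i) && (i \notin belast v s).

Lemma first_visit_at_end_cons v w s :
  first_visit_at_end v (w :: s) = (v != i) && first_visit_at_end w s.
Proof. by rewrite /first_visit_at_end /= inE negb_or [i == v]eq_sym andbCA. Qed.

Lemma first_hit_tuple n u v :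
  \sum_(s : n.-tuple T) (\prod_(k < n) step (nth i [:: u, v & s] k)
      (nth i [:: u, v & s] k.+1) (nth i [:: u, v & s] k.+2)) *
    (first_visit_at_end v s)%:R = first_hit n u v.
Proof.
elim: n u v => [|n IH] u v.
  by rewrite sum_tuple0 big_ord0 mul1r /first_visit_at_end andbT.
rewrite sum_tuple_cons /=; case: (eqVneq v i) => [->|v_neq_i].
  rewrite mul0r big1 // => w _; rewrite big1 // => s _.
  by rewrite first_visit_at_end_cons eqxx mulr0.
rewrite mul1r; apply: eq_bigr => w _; rewrite -IH mulr_sumr; apply: eq_bigr => s _.
by rewrite big_ord_recl first_visit_at_end_cons v_neq_i mulrA.
Qed.

Lemma return_event_first_visit n v (s : n.-tuple T) :
  (nth i [:: i, v & s] n.+1 == i) &&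
  [forall k : 'I_n.+2, ((0 < k) && (k < n.+1))%N ==> (nth i [:: i, v & s] k != i)]
  = first_visit_at_end v s.
Proof.
have sz : size (belast v s) = n by rewrite size_belast size_tuple.
rewrite /first_visit_at_end [v :: s]lastI /= nth_rcons sz ltnn eqxx; congr (_ && _).
apply/forallP/idP => [avoid_i | i_notin [[|k] lt_k]] //=.
  apply/(nthP i) => -[j]; rewrite sz => lt_j nth_j.
  have := avoid_i (@Ordinal n.+2 j.+1 (ltnW lt_j)).
  by rewrite /= ltnS lt_j nth_rcons sz lt_j nth_j eqxx.
rewrite ltnS; apply/implyP => lt_kn.
rewrite nth_rcons sz lt_kn; apply: contra i_notin => /eqP <-.
by apply: mem_nth; rewrite sz.
Qed.

Lemma return_dist_first_hit n : bbrw_return_dist e R i n.+1 =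
  \sum_v (e i v)%:R / (deg e i)%:R * first_hit n i v.
Proof.
rewrite /bbrw_return_dist big_mkcond sum_tuple_cons (bigD1 i) //=.
rewrite [X in _ + X]big1 ?addr0; last first.
  by move=> a a_neq_i; apply: big1 => s _; rewrite /= (negbTE a_neq_i).
rewrite sum_tuple_cons; apply: eq_bigr => v _.
rewrite -first_hit_tuple mulr_sumr; apply: eq_bigr => s _.
rewrite /= eqxx return_event_first_visit /bbrw_path_prob /= eqxx mul1r.
by case: (first_visit_at_end v s); rewrite ?mulr1 ?mulr0 ?mulrA.
Qed.

(* [return_tail n] is P(T > n), T the return time to [i]. *)
Definition return_tail n := \sum_v (e i v)%:R / (deg e i)%:R * survival n i v.

Lemma return_dist_tail n :
  bbrw_return_dist e R i n.+1 = return_tail n - return_tail n.+1.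
Proof.
by rewrite return_dist_first_hit -sumrB; apply: eq_bigr => v _; rewrite first_hitE mulrBr.
Qed.

Lemma return_tail_nonincreasing : nonincreasing_seq return_tail.
Proof.
move=> m n mn; apply: ler_sum => v _.
by apply: ler_wpM2l; [rewrite divr_ge0 | exact: survival_nonincreasing].
Qed.

Lemma return_tail0 : (0 < deg e i)%N -> return_tail 0 = 1.
Proof.
move=> deg_gt0; rewrite /return_tail /=; under eq_bigr do rewrite mulr1.
by rewrite -mulr_suml sum_nbr_deg divff // pnatr_eq0 -lt0n.
Qed.

End ReturnDistribution.

Section SymmetricGraph.
Variables (R : realType) (T : finType) (e : rel T) (i : T).
Hypothesis e_sym : symmetric e.
Local Notation step := (bbrw_step e R).
Local Notation survival := (survival R e i).
Local Notation return_tail := (return_tail R e i).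

Lemma bbrw_step_stationary v w : \sum_u (e u v)%:R * step u v w = (e v w)%:R.
Proof.
have -> : \sum_u (e u v)%:R * step u v w = \sum_(u in nbr e v) step u v w.
  rewrite [RHS]big_mkcond; apply: eq_bigr => u _; rewrite inE e_sym.
  by case: (e v u); rewrite ?mul1r ?mul0r.
have card_nbrD1 u : u \in nbr e v -> #|nbr e v :\ u| = (deg e v).-1.
  by move=> Nu; rewrite /deg (cardsD1 u (nbr e v)) Nu.
case Nw: (e v w); last first.
  rewrite big1 // => u Nu; have w_neq_u : w != u by apply: contraFneq Nw => ->; rewrite inE in Nu.
  by rewrite /bbrw_step /= in_setD1 (negbTE w_neq_u) inE Nw mul0r; case: ifP.
have {}Nw : w \in nbr e v by rewrite inE.
have [deg_le1 | deg_gt1] := leqP (deg e v) 1.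
  have /cards1P[a Na] : #|nbr e v| == 1%N.
    by rewrite eqn_leq deg_le1; apply/card_gt0P; exists w.
  move: Nw; rewrite Na big_set1 inE => /eqP ->.
  by rewrite /bbrw_step /= card_nbrD1 /deg Na ?cards1 ?set11 //= eqxx.
have deg_pred_neq0 : (deg e v).-1%:R != 0 :> R by rewrite pnatr_eq0 -lt0n; lia.
rewrite (eq_bigr (fun u => (u != w)%:R / (deg e v).-1%:R)); last first.
  move=> u Nu; rewrite /bbrw_step /= card_nbrD1 // -(eqr_nat R) ifN //.
  by rewrite in_setD1 Nw andbT eq_sym.
rewrite -mulr_suml.
have -> : \sum_(u in nbr e v) ((u != w)%:R : R) = (deg e v).-1%:R.
  rewrite -(card_nbrD1 w Nw) -sum1_card natr_sum big_mkcond [RHS]big_mkcond /=.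
  by apply: eq_bigr => u _; rewrite in_setD1 andbC; case: (u \in _); case: (u != w).
by rewrite divff.
Qed.

Lemma bbrw_step_leaf u v : e u v -> deg e v = 1%N -> 0 < step u v u.
Proof.
move=> uv deg_v; have Nu : u \in nbr e v by rewrite inE e_sym.
have S0 : #|nbr e v :\ u| = 0%N by move: deg_v; rewrite /deg (cardsD1 u) Nu => -[].
by rewrite /bbrw_step /= S0 !eqxx ltr01.
Qed.

Lemma bbrw_step_gt0_edge u v w : e u v -> 0 < step u v w -> e v w.
Proof.
move=> uv; rewrite /bbrw_step /=; case: ifP => _.
  by case: eqVneq => [->|_]; rewrite ?ltxx // e_sym.
by case: (boolP (w \in _)) => [|_]; rewrite ?mul0r ?ltxx // in_setD1 inE => /andP[].
Qed.

Lemma arc_sum_step (f : T -> T -> R) :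
  \sum_u \sum_v (e u v)%:R * (\sum_w step u v w * f v w) =
  \sum_v \sum_w (e v w)%:R * f v w.
Proof.
rewrite exchange_big; apply: eq_bigr => v _.
under eq_bigr do rewrite mulr_sumr.
rewrite exchange_big; apply: eq_bigr => w _.
by rewrite -bbrw_step_stationary mulr_suml; apply: eq_bigr => u _; rewrite !mulrA.
Qed.

(* The [Phi] of the proof sketch: the starting arc is drawn from the
   stationary (uniform) measure on arcs. *)
Definition arc_survival n := \sum_u \sum_v (e u v)%:R * survival n u v.

Lemma arc_survival_ge0 n : 0 <= arc_survival n.
Proof. by do 2![apply: sumr_ge0 => ? _]; rewrite mulr_ge0 ?survival_ge0. Qed.

Lemma arc_survival_nonincreasing : nonincreasing_seq arc_survival.
Proof.
move=> m n mn; do 2![apply: ler_sum => ? _].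
by rewrite ler_wpM2l // survival_nonincreasing.
Qed.

Lemma arc_survival_decrement n :
  arc_survival n - arc_survival n.+1 = \sum_w (e i w)%:R * survival n i w.
Proof.
have -> : \sum_w (e i w)%:R * survival n i w =
    \sum_u \sum_v (e u v)%:R * (\sum_w step u v w * ((v == i)%:R * survival n v w)).
  rewrite arc_sum_step [RHS](bigD1 i) //= [X in _ + X]big1 ?addr0 => [|v /negbTE v_neq_i].
    by apply: eq_bigr => w _; rewrite eqxx mul1r.
  by apply: big1 => w _; rewrite v_neq_i mul0r mulr0.
apply/eqP; rewrite subr_eq; apply/eqP.
rewrite /arc_survival -[X in X = _](arc_sum_step (survival n)) -big_split.
apply: eq_bigr => u _; rewrite -big_split; apply: eq_bigr => v _.
rewrite survivalS /= -mulrDr; congr (_ * _); case: (v == i) => /=.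
  by under [in RHS]eq_bigr do rewrite mul1r; rewrite mul0r addr0.
by rewrite mul1r [X in _ = X + _]big1 ?add0r // => w _; rewrite mul0r mulr0.
Qed.

Lemma series_return_tail : arc_survival @ \oo --> 0 ->
  series return_tail @ \oo --> arc_survival 0 / (deg e i)%:R.
Proof.
move=> arc_survival_cvg0.
have tailE n : return_tail n = (arc_survival n - arc_survival n.+1) / (deg e i)%:R.
  rewrite arc_survival_decrement mulr_suml; apply: eq_bigr => v _; exact: mulrAC.
have seriesE n : series return_tail n = (arc_survival 0 - arc_survival n) / (deg e i)%:R.
  elim: n => [|n IH]; first by rewrite /series /= big_geq // subrr mul0r.
  by rewrite seriesSr IH tailE -mulrDl addrA subrK.
rewrite (funext seriesE); apply: cvgMl; rewrite -[X in _ --> X]subr0.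
exact: cvgB (cvg_cst _) arc_survival_cvg0.
Qed.

Lemma survival_addn_le m (M : R) n u v : 0 <= M ->
  (forall u v, e u v -> survival m u v <= M) -> e u v ->
  survival (n + m) u v <= M * survival n u v.
Proof.
move=> M_ge0 surv_le_M; elim: n u v => [|n IH] u v uv; first by rewrite add0n mulr1 surv_le_M.
rewrite addSn !survivalS mulrCA ler_wpM2l // mulr_sumr ler_sum // => w _.
have [vw | /negbTE vw] := boolP (e v w); first by rewrite mulrCA ler_wpM2l ?bbrw_step_ge0 ?IH.
have -> : step u v w = 0.
  by apply/eqP; rewrite eq_le bbrw_step_ge0 andbT leNgt; exact: contraFN (bbrw_step_gt0_edge uv) vw.
by rewrite !mul0r mulr0.
Qed.

Lemma survival_geometric K (M : R) j u v : 0 <= M ->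
  (forall u v, e u v -> survival K u v <= M) -> e u v -> survival (j * K) u v <= M ^+ j.
Proof.
move=> M_ge0 surv_le_M; elim: j u v => [|j IH] u v uv; first by rewrite mul0n expr0.
rewrite mulSn addnC exprS (le_trans (survival_addn_le _ M_ge0 surv_le_M uv)) //.
by rewrite ler_wpM2l ?IH.
Qed.

Hypothesis e_irr : irreflexive e.

Lemma sum_arcs : (\sum_u \sum_v e u v = 2 * #|edges e|)%N.
Proof.
have -> : (\sum_u \sum_v e u v = \sum_(p : T * T | e p.1 p.2) 1)%N.
  by rewrite pair_big [RHS]big_mkcond; apply: eq_bigr => -[u v] _; case: (e u v).
rewrite (partition_big (fun p => [set p.1; p.2]%SET) (fun E => E \in edges e)) /=;
  last first.
  move=> [u v] uv; rewrite /edges finset.in_set.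
  by apply/existsP; exists u; apply/existsP; exists v; rewrite uv eqxx.
rewrite mulnC -sum_nat_const; apply: eq_bigr => E.
rewrite /edges finset.in_set => /existsP[x /existsP[y /andP[xy /eqP->]]].
have x_neq_y : x != y by apply: contraTneq xy => ->; rewrite e_irr.
rewrite (eq_bigl (mem [set (x, y); (y, x)]%SET)) => [|[a b]].
  by rewrite sum1_card cards2 xpair_eqE negb_and x_neq_y.
rewrite /= !inE !xpair_eqE; case ab: (e a b) => /=.
  by rewrite eq_set2 //; apply: contraTneq ab => ->; rewrite e_irr.
by apply/esym/negbTE; apply: contraFN ab => /orP[] /andP[/eqP-> /eqP->] //; rewrite e_sym.
Qed.

Lemma arc_survival0 : arc_survival 0 = (2 * #|edges e|)%:R.
Proof.
rewrite -sum_arcs natr_sum /arc_survival.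
by apply: eq_bigr => u _; rewrite natr_sum; apply: eq_bigr => v _; rewrite mulr1.
Qed.

End SymmetricGraph.

Section Tree.
Variables (R : realType) (T : finType) (e : rel T) (i : T).
Hypotheses (e_sym : symmetric e) (e_irr : irreflexive e).
Hypothesis e_connected : forall x y : T, connect e x y.
Hypothesis e_acyclic : forall c : seq T, uniq c -> (2 < size c)%N -> ~~ cycle e c.
Local Notation step := (bbrw_step e R).
Local Notation survival := (survival R e i).
Local Notation arc_survival := (arc_survival R e i).

Definition may_hit u v := exists n, survival n u v < 1.

Lemma may_hit_at u : may_hit u i.
Proof. by exists 1%N; rewrite survivalS eqxx mul0r ltr01. Qed.

Lemma may_hit_step u v w : v != i -> 0 < step u v w -> may_hit v w -> may_hit u v.
Proof.
move=> v_neq_i step_gt0 [n lt1]; exists n.+1.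
rewrite survivalS v_neq_i mul1r -[ltRHS](bbrw_step_sum1 R e u v).
rewrite [ltLHS](bigD1 w) // [ltRHS](bigD1 w) //= ltr_leD ?gtr_pMr //.
by apply: ler_sum => w' _; rewrite ler_piMr ?bbrw_step_ge0 ?survival_le1.
Qed.

Lemma may_hit_path u v p : e u v -> path e v p -> uniq (v :: p) -> u \notin p ->
  last v p = i -> may_hit u v.
Proof.
elim: p u v => [|w p IH] u v /=; first by move=> _ _ _ _ ->; exact: may_hit_at.
move=> uv /andP[vw wp] /andP[v_notin uniq_p]; rewrite inE negb_or => /andP[u_neq_w u_notin] last_i.
have [-> | v_neq_i] := eqVneq v i; first exact: may_hit_at.
apply: (may_hit_step v_neq_i (bbrw_step_gt0 R vw _)); first by rewrite eq_sym.
by apply: IH => //; move: v_notin; rewrite inE negb_or => /andP[].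
Qed.

Lemma may_hit_leaf u v : e u v -> deg e v = 1%N -> may_hit u v.
Proof.
move=> uv deg_v; have [-> | v_neq_i] := eqVneq v i; first exact: may_hit_at.
have /cards1P[a Na] : #|nbr e v| == 1%N by rewrite -/(deg e v) deg_v.
have Nv_eq1 x : e v x -> x = u.
  move=> vx; have : x \in nbr e v by rewrite inE.
  have : u \in nbr e v by rewrite inE e_sym.
  by rewrite Na !inE => /eqP -> /eqP.
case/connectP: (e_connected v i) => p path_p; case/shortenP: path_p => -[|c q] /=.
  by move=> _ _ _ i_eq_v; rewrite i_eq_v eqxx in v_neq_i.
move=> /andP[/Nv_eq1 -> path_q] /andP[v_notin uniq_q] _ i_last.
apply: may_hit_step v_neq_i (bbrw_step_leaf R e_sym uv deg_v) _.
apply: (may_hit_path (p := q)) => //; first by rewrite e_sym.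
by move: v_notin; rewrite inE negb_or => /andP[].
Qed.

Lemma uniq_path_extend b a p : uniq [:: b, a & p] -> path e b (a :: p) ->
  deg e b != 1%N -> exists2 c, e b c & c \notin [:: b, a & p].
Proof.
move=> uniq_bap path_bap deg_b.
have Na : a \in nbr e b by rewrite inE; case/andP: path_bap.
have /card_gt0P[c] : (0 < #|nbr e b :\ a|)%N.
  by move: deg_b; rewrite /deg (cardsD1 a) Na; case: #|_ :\ a|.
rewrite in_setD1 inE => /andP[c_neq_a bc]; exists c => //.
have c_neq_b : c != b by apply: contraTneq bc => ->; rewrite e_irr.
rewrite !inE (negbTE c_neq_b) (negbTE c_neq_a) /=; apply/negP => c_in_p.
case/splitPr: c_in_p uniq_bap path_bap => p1 p2.
rewrite -cat_rcons -!cat_cons cat_uniq cat_path => /andP[uniq_c _] /andP[path_c _].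
have long_c : (2 < size [:: b, a & rcons p1 c])%N by rewrite /= size_rcons.
apply: (negP (e_acyclic uniq_c long_c)).
by rewrite /cycle rcons_path path_c /= last_rcons e_sym.
Qed.

Lemma may_hit_uniq_path b a p : uniq [:: b, a & p] -> path e b (a :: p) ->
  may_hit a b.
Proof.
have [k] := ubnP (#|T| - size p); elim: k b a p => // k IH b a p lt_k uniq_bap path_bap.
have [-> | b_neq_i] := eqVneq b i; first exact: may_hit_at.
have ab : e a b by rewrite e_sym; case/andP: path_bap.
have [deg_b | deg_b] := eqVneq (deg e b) 1%N; first exact: may_hit_leaf.
have [c bc c_notin] := uniq_path_extend uniq_bap path_bap deg_b.
have c_neq_a : c != a by apply: contraNneq c_notin => ->; rewrite !inE eqxx orbT.
apply: may_hit_step b_neq_i (bbrw_step_gt0 R bc c_neq_a) _.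
have uniq_cbap : uniq [:: c, b, a & p] by rewrite cons_uniq c_notin.
have := max_card (mem [:: c, b, a & p]); rewrite (card_uniqP uniq_cbap) => size_le.
apply: IH uniq_cbap _; last by rewrite /= [e c b]e_sym bc.
by move: size_le lt_k => /=; lia.
Qed.

Lemma may_hit_arc u v : e u v -> may_hit u v.
Proof.
move=> uv; apply: (@may_hit_uniq_path v u [::]); last by rewrite /= [e v u]e_sym uv.
by rewrite /= inE andbT; apply: contraTneq uv => ->; rewrite e_irr.
Qed.

Lemma survival_arcs_uniform_lt1 : exists K (M : R),
  [/\ 0 <= M, M < 1 & forall u v, e u v -> survival K u v <= M].
Proof.
have : \forall n \near \oo, forall p : T * T, e p.1 p.2 -> survival n p.1 p.2 < 1.
  apply: filter_forall => -[u v] /=; have [uv | _] := boolP (e u v); last by near=> n.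
  have [n0 lt1] := may_hit_arc uv; near=> n => _.
  apply: le_lt_trans lt1; apply: survival_nonincreasing; near: n; exact: nbhs_infty_ge.
case=> K _ /(_ K (leqnn K)) lt1.
exists K, (\big[Num.max/0]_(p : T * T | e p.1 p.2) survival K p.1 p.2); split.
- apply: (big_ind (fun x : R => 0 <= x)) => // [x y x_ge0 _|p _].
    by rewrite le_max x_ge0.
  exact: survival_ge0.
- apply: (big_ind (fun x : R => x < 1)) => [|x y x1 y1|p]; last exact: lt1.
    exact: ltr01.
  by rewrite gt_max x1 y1.
- by move=> u v uv; rewrite (bigD1 (u, v)) //= le_max lexx.
Unshelve. all: by end_near.
Qed.

Lemma arc_survival_cvg0 : arc_survival @ \oo --> 0.
Proof.
have [K [M [M_ge0 M_lt1 surv_le_M]]] := survival_arcs_uniform_lt1.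
have decay j : arc_survival (j * K) <= arc_survival 0 * M ^+ j.
  rewrite mulr_suml; apply: ler_sum => u _; rewrite mulr_suml; apply: ler_sum => v _.
  by case: (boolP (e u v)) => uv; rewrite ?mul0r // !mul1r survival_geometric.
have M_norm_lt1 : `|M| < 1 by rewrite ger0_norm.
apply/cvgrPdist_le => eps eps0.
have [j _ geom_near] :=
  proj1 (cvgrPdist_le _ _) (cvg_geometric (arc_survival 0) M_norm_lt1) eps eps0.
near=> n; rewrite sub0r normrN ger0_norm ?arc_survival_ge0 //.
have jK_le : (j * K <= n)%N by near: n; exact: nbhs_infty_ge.
apply: le_trans (arc_survival_nonincreasing R e i jK_le) (le_trans (decay j) _).
by have := geom_near j (leqnn j); rewrite sub0r normrN; apply: le_trans; apply: ler_norm.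
Unshelve. all: by end_near.
Qed.

End Tree.

Theorem lemma6 (R : realType) (T : finType) (e : rel T) (i : T) :
  simple_graph e -> is_tree e -> (0 < #|edges e|)%N ->
  series (bbrw_return_dist e R i) @ \oo --> (1 : R) /\
  series (fun n => n%:R * bbrw_return_dist e R i n) @ \oo
    --> ((2 * #|edges e|)%:R / (deg e i)%:R : R).
Proof.
move=> [e_sym e_irr] [e_conn e_acyc] edges_gt0.
have deg_gt0 := deg_gt0_connected i e_conn edges_gt0.
have tail_cvg := series_return_tail e_sym
  (arc_survival_cvg0 (R := R) i e_sym e_irr e_conn e_acyc).
split.
  have := series_telescope_cvg (return_dist_tail R e i) (cvg_series_cvg_0 (cvgP _ tail_cvg)).
  by rewrite return_tail0 // add0r.
rewrite -(arc_survival0 R i e_sym e_irr).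
exact: series_tail_sum (return_tail_nonincreasing R e i) (return_dist_tail R e i) tail_cvg.
Qed.
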